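(* Let $(t_i)_{i\in\mathbb{N}}$ be a sequence of real numbers that are algebraically independent over $\mathbb{Q}$, and let $A=\{P_{i,j} : i,j\in\mathbb{N},\ i<j\}\subseteq\mathbb{R}^2$, where $P_{i,j} = (t_i + t_j,\ t_i^2 + t_it_j + t_j^2)$. Then for no positive integer $m$ can $A$ be partitioned as $A=A_1\cup\cdots\cup A_m$ with each $A_r$ containing no three collinear points. *)

From HB Require Import structures.
From mathcomp Require Import all_boot all_order all_algebra.
From mathcomp Require Import reals.
From mathcomp Require Import mpoly.
Set Implicit Arguments. Unset Strict Implicit. Unset Printing Implicit Defensive.
Import Order.TTheory GRing.Theory Num.Theory.
Local Open Scope ring_scope.

(* Every finite subfamily lies in a prefix t_0, ..., t_{n-1}, so it suffices
   (and is equivalent) to quantify over polynomials in the first n variables. *)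
Definition alg_indep_Q (R : realType) (t : nat -> R) : Prop :=
  forall (n : nat) (p : {mpoly rat[n]}),
    p != 0 -> (map_mpoly (ratr : rat -> R) p).@[fun i : 'I_n => t (nat_of_ord i)] != 0.

Definition Pt (R : realType) (t : nat -> R) (i j : nat) : R * R :=
  (t i + t j, t i ^+ 2 + t i * t j + t j ^+ 2).

Definition inA (R : realType) (t : nat -> R) (x : R * R) : Prop :=
  exists i j : nat, (i < j)%N /\ x = Pt t i j.

Definition collinear (R : realType) (p q r : R * R) : Prop :=
  (q.1 - p.1) * (r.2 - p.2) - (q.2 - p.2) * (r.1 - p.1) = 0.

Definition no_three_collinear (R : realType) (S : R * R -> Prop) : Prop :=
  forall p q r, S p -> S q -> S r -> p <> q -> p <> r -> q <> r ->
    ~ collinear p q r.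

From HB Require Import structures.
From mathcomp Require Import all_boot all_order all_algebra.
From mathcomp Require Import reals.
From mathcomp Require Import mpoly.
From mathcomp Require Import ring zify.
From Stdlib Require Import ClassicalEpsilon.
Set Implicit Arguments. Unset Strict Implicit. Unset Printing Implicit Defensive.
Import Order.TTheory GRing.Theory Num.Theory.
Local Open Scope ring_scope.

(* For any indices x, y, z the three points P_{x,y}, P_{x,z}, P_{y,z} are
   collinear, and they are distinct since the t_i are.  Colour each pair
   {i, j} by the part containing P_{i,j}: by Ramsey's theorem for triangles
   some triangle {x, y, z} is monochromatic, giving three collinear points in
   one part. *)

Lemma count_mem_le_sum (T V : eqType) (g : V -> T) (C : seq T) (s : seq V) :
  (count (fun w => g w \in C) s <= \sum_(c <- C) count (fun w => g w == c) s)%N.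
Proof.
elim: C => [|c C IH]; first by rewrite big_nil count_pred0.
have /eq_count -> :
    (fun w => g w \in c :: C) =1 predU (fun w => g w == c) (fun w => g w \in C).
  by move=> w; rewrite /= in_cons.
have := count_predUI (fun w => g w == c) (fun w => g w \in C) s.
rewrite big_cons; lia.
Qed.

Lemma count_pigeonhole (T V : eqType) (g : V -> T) (C : seq T) (s : seq V) n :
  all (fun w => g w \in C) s -> (size C * n < size s)%N ->
  exists2 c, c \in C & (n < count (fun w => g w == c) s)%N.
Proof.
move=> gC ltCs; apply/hasP; apply: contraLR ltCs => /hasPn small.
rewrite -leqNgt -(eqP (etrans (esym (all_count _ _)) gC)).
apply: (leq_trans (count_mem_le_sum g C s)).
have -> : (size C * n = \sum_(c <- C) n)%N.
  by rewrite big_const_seq count_predT iter_addn_0 mulnC.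
rewrite big_seq [leqRHS]big_seq.
by apply: leq_sum => c cC; rewrite leqNgt small.
Qed.

Lemma size_filter_predC1 (T : eqType) (c : T) (C : seq T) :
  c \in C -> (size (filter (predC1 c) C) < size C)%N.
Proof.
move=> cC; rewrite size_filter -(count_predC (pred1 c)).
by rewrite -[X in (X < _)%N]add0n ltn_add2r -has_count has_pred1.
Qed.

Fixpoint triangle_ramsey_bound (k : nat) : nat :=
  if k is k'.+1 then (k'.+1 * (triangle_ramsey_bound k' - 1) + 2)%N else 2%N.

Section MonochromaticTriangle.

Variables (V T : eqType) (e : V -> V -> T).

Lemma monochromatic_triangle k (C : seq T) (S : seq V) :
  (size C <= k)%N -> uniq S -> {in S &, forall x y, x != y -> e x y \in C} ->
  (triangle_ramsey_bound k <= size S)%N ->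
  exists x y z, [/\ x \in S, y \in S, z \in S, [/\ x != y, x != z & y != z]
                  & e x z = e x y /\ e y z = e x y].
Proof.
elim: k C S => [|k IH] C S sizeC uS eC sizeS.
  move: sizeC; rewrite leqn0 => /nilP C0.
  case: S uS eC sizeS => [|a [|b S]] // /andP[aS _] eC _.
  have ab : a != b by apply/eqP => ab; rewrite ab mem_head in aS.
  by move: (eC a b); rewrite !inE !eqxx orbT C0 => /(_ isT isT ab).
case: S uS eC sizeS => [_ _|v S' /andP[vS' uS'] eC sizeS]; first by rewrite /= addn2.
have v_neq w : w \in S' -> v != w by move=> wS'; apply/eqP => vw; rewrite vw wS' in vS'.
have S'S w : w \in S' -> w \in v :: S' by rewrite inE => ->; rewrite orbT.
(* The neighbours N of v along its most frequent colour c number at least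
   triangle_ramsey_bound k: an edge of colour c inside N closes a triangle with
   v, and otherwise N is coloured with the k remaining colours. *)
have [c cC many_c] : exists2 c, c \in C &
    (triangle_ramsey_bound k - 1 < count (fun w => e v w == c) S')%N.
  apply: count_pigeonhole.
    by apply/allP => w wS'; apply: eC; rewrite ?mem_head ?S'S ?v_neq.
  by apply: leq_ltn_trans (leq_mul sizeC (leqnn _)) _; rewrite /= addn2 in sizeS.
set N := [seq w <- S' | e v w == c].
have inN w : w \in N -> w \in S' /\ e v w = c by rewrite mem_filter => /andP[/eqP].
have [|] := boolP (has (fun x => has (fun y => (x != y) && (e x y == c)) N) N).
  case/hasP=> x /inN[xS' evx] /hasP[y /inN[yS' evy] /andP[xy /eqP exy]].
  exists v, x, y; split; rewrite ?mem_head ?S'S ?evx ?evy ?exy //.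
  by rewrite !v_neq.
move/hasPn=> no_c.
have sizeC' : (size (filter (predC1 c) C) <= k)%N.
  by rewrite -ltnS (leq_trans (size_filter_predC1 cC) sizeC).
have eN : {in N &, forall x y, x != y -> e x y \in filter (predC1 c) C}.
  move=> a b /[dup] aN /inN[aS' _] /[dup] bN /inN[bS' _] ab.
  rewrite mem_filter eC ?S'S // andbT.
  by move/hasPn: (no_c a aN) => /(_ b bN); rewrite ab.
have sizeN : (triangle_ramsey_bound k <= size N)%N.
  by rewrite size_filter; move: many_c; rewrite subn1; case: (triangle_ramsey_bound k).
have [x [y [z [/inN[xS' _] /inN[yS' _] /inN[zS' _] neq mono]]]] :=
  IH _ _ sizeC' (filter_uniq _ uS') eN sizeN.
by exists x, y, z; rewrite !S'S.
Qed.

End MonochromaticTriangle.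

Lemma ord_coloring_monochromatic_triangle k (col : nat -> nat -> 'I_k) :
  exists x y z, [/\ x != y, x != z, y != z, col x z = col x y & col y z = col x y].
Proof.
pose S := iota 0 (triangle_ramsey_bound k).
have colC : {in S &, forall x y, x != y -> col x y \in enum 'I_k}.
  by move=> *; rewrite mem_enum.
have [x [y [z [_ _ _ [xy xz yz] [exz eyz]]]]] := monochromatic_triangle
  (eq_leq (size_enum_ord k)) (iota_uniq 0 _) colC (eq_leq (esym (size_iota _ _))).
by exists x, y, z.
Qed.

Section PairPoints.

Variables (R : realType) (t : nat -> R).

Lemma Pt_sym i j : Pt t i j = Pt t j i.
Proof. by rewrite /Pt; congr pair; ring. Qed.

Lemma Pt_injr i j k : Pt t i j = Pt t i k -> t j = t k.
Proof. by case=> /addrI. Qed.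

Lemma collinear_Pt x y z : collinear (Pt t x y) (Pt t x z) (Pt t y z).
Proof. by rewrite /collinear /Pt /=; ring. Qed.

Lemma inA_Pt i j : i != j -> inA t (Pt t i j).
Proof.
case: (ltngtP i j) => // [ij|ji] _; first by exists i, j.
by exists j, i; rewrite Pt_sym.
Qed.

Lemma alg_indep_Q_inj : alg_indep_Q t -> injective t.
Proof.
move=> ht i j tij; case: (eqVneq i j) => // ij; exfalso.
pose n := (maxn i j).+1.
have ltin : (i < n)%N by rewrite ltnS leq_maxl.
have ltjn : (j < n)%N by rewrite ltnS leq_maxr.
pose p : {mpoly rat[n]} := 'X_(Ordinal ltin) - 'X_(Ordinal ltjn).
have p_neq0 : p != 0.
  apply/eqP => /(congr1 (mcoeff U_(Ordinal ltin))).
  rewrite mcoeffB !mcoeffXU mcoeff0 eqxx -val_eqE /= eq_sym (negPf ij) subr0.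
  by move/eqP; rewrite oner_eq0.
move: (ht n p p_neq0).
by rewrite rmorphB /= !map_mpolyX mevalB !mevalXU /= tij subrr eqxx.
Qed.

End PairPoints.

Theorem mainTheorem4 (R : realType) (t : nat -> R) (ht : alg_indep_Q t) :
  forall m : nat, (0 < m)%N ->
  ~ exists parts : 'I_m -> (R * R -> Prop),
      (forall x, inA t x <-> exists r : 'I_m, parts r x) /\
      (forall (r s : 'I_m) x, parts r x -> parts s x -> r = s) /\
      (forall r : 'I_m, no_three_collinear (parts r)).
Proof.
case=> // m _ [parts [cover [_ no3]]].
pose part_of (p : R * R) := epsilon (inhabits ord0) (fun r => parts r p).
have part_ofP i j : i != j -> parts (part_of (Pt t i j)) (Pt t i j).
  by move=> ij; apply: (epsilon_spec _ (fun r => parts r _)); apply/cover/inA_Pt.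
have tI := alg_indep_Q_inj ht.
have [x [y [z [xy xz yz exz eyz]]]] :=
  ord_coloring_monochromatic_triangle (fun i j => part_of (Pt t i j)).
apply: (no3 (part_of (Pt t x y)) (Pt t x y) (Pt t x z) (Pt t y z) (part_ofP _ _ xy)).
- by rewrite -exz; apply: part_ofP.
- by rewrite -eyz; apply: part_ofP.
- by move/Pt_injr/tI/eqP; rewrite (negPf yz).
- by rewrite Pt_sym => /Pt_injr/tI/eqP; rewrite (negPf xz).
- by rewrite Pt_sym [Pt t y z]Pt_sym => /Pt_injr/tI/eqP; rewrite (negPf xy).
- exact: collinear_Pt.
Qed.
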